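(* Let $s\in(0,1]$, $r=1-s$, and let $\{a_n\}_{n\in\mathbb Z}$ be i.i.d. geometric random variables on $\{1,2,\dots\}$ with $\mathbb P[a_0>i]=r^i$ for $i\ge 0$. Let $N_n=\#\{m\in\mathbb Z: m<n,\ m+a_m>n\}+1$ (the stationary population process), and let $G(z)=\mathbb E[z^{N_0}]$, $z\in[0,1]$, be the probability generating function of $N_0$. Then $$G(z)=z\,G(rz+s)\qquad\text{for all } z\in[0,1].$$ *)

From HB Require Import structures.
From mathcomp Require Import all_boot all_order all_algebra finmap.
From mathcomp Require Import all_classical all_reals all_analysis.
Set Implicit Arguments. Unset Strict Implicit. Unset Printing Implicit Defensive.
Import Order.TTheory GRing.Theory Num.Theory.
Local Open Scope classical_set_scope.
Local Open Scope ring_scope.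

Definition rv_family d (T : measurableType d) (a : int -> T -> nat) :=
  forall n, measurable_fun setT (a n).

Definition mutually_independent d (T : measurableType d) (R : realType)
  (P : probability T R) (a : int -> T -> nat) :=
  forall (F : {fset int}) (B : int -> set nat),
    P (\bigcap_(n in [set` F]) (a n @^-1` B n)) =
    (\prod_(n <- F) P (a n @^-1` B n))%E.

Definition geometric_tails d (T : measurableType d) (R : realType)
  (P : probability T R) (r : R) (a : int -> T -> nat) :=
  forall (n : int) (i : nat), P [set w | (i < a n w)%N] = (r ^+ i)%:E.

(* N_0 = #{m in Z : m < 0, m + a_m > 0} + 1  (the set is a.s. finite;
   fset_set returns the empty set on the null event where it is infinite) *)
Definition N0 d (T : measurableType d) (a : int -> T -> nat) (w : T) : nat :=
  (#|` fset_set [set m : int | m < 0 /\ 0 < m + (a m w)%:Z] |).+1.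

Definition pgf_N0 d (T : measurableType d) (R : realType)
  (P : probability T R) (a : int -> T -> nat) (z : R) : \bar R :=
  (\int[P]_w ((z ^+ N0 a w)%:E))%E.

(* Truncating the past at time -K gives N_K = 1 + #{1 <= k <= K : a_{-k} > k}.
   The events {a_{-k} > k} are independent with probabilities r^k, so
   E[z^N_K] = z * prod_{k=1}^K (1 - (1 - z) r^k) =: Q_K(z), and
   Q_{K+1}(z) = z * Q_K(rz + s) because 1 - (1 - (rz + s)) r^k = 1 - (1 - z) r^(k+1).
   N_0 and N_K differ only if an arrival before time -K is still present at time 0,
   which has probability at most r^(K+1) / s; hence |G(z) - z G(rz + s)| = O(r^K). *)

From HB Require Import structures.
From mathcomp Require Import all_boot all_order all_algebra finmap.
From mathcomp Require Import all_classical all_reals all_analysis.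
From mathcomp Require Import measurable_realfun zify ring lra.
Set Implicit Arguments. Unset Strict Implicit. Unset Printing Implicit Defensive.
Import Order.TTheory GRing.Theory Num.Theory numFieldNormedType.Exports.
Local Open Scope classical_set_scope.
Local Open Scope ring_scope.

Section truncated_pgf.
Variable R : comRingType.

Definition trunc_pgf (r z : R) (K : nat) : R :=
  z * \prod_(k < K) (1 - (1 - z) * r ^+ k.+1).

Lemma trunc_pgfS (r z : R) K :
  trunc_pgf r z K.+1 = z * trunc_pgf r (r * z + (1 - r)) K.
Proof.
rewrite /trunc_pgf big_ord_recl; congr (z * (_ * _)); first by ring.
by apply: eq_bigr => k _; rewrite /= /bump /= add1n exprS; ring.
Qed.

End truncated_pgf.

Lemma affine_unit_interval (R : realFieldType) (r z : R) :
  0 <= r <= 1 -> 0 <= z <= 1 -> 0 <= r * z + (1 - r) <= 1.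
Proof. by move=> /andP[r0 r1] /andP[z0 z1]; apply/andP; split; nra. Qed.

Section independent_events.
Context d (T : measurableType d) (R : realType) (P : probability T R).
Context (I : choiceType) (E : I -> set T).
Hypothesis mE : forall i, measurable (E i).
Hypothesis indepE : forall F : {fset I},
  P (\bigcap_(i in [set` F]) E i) = (\prod_(i <- F) P (E i))%E.

Let EF (F : {fset I}) := \bigcap_(i in [set` F]) E i.

Let measurable_EF F : measurable (EF F).
Proof. by apply: fin_bigcap_measurable => //; exact: finite_fset. Qed.

Let P_EF_fsetU1 i F : i \notin F -> P (EF (i |` F)%fset) = (P (E i) * P (EF F))%E.
Proof. by move=> iF; rewrite /EF !indepE big_fsetU1. Qed.

Lemma integral_prod_affine_indic (c : R) (s : seq I) (F : {fset I}) :
  0 <= c <= 1 -> uniq s -> all (fun i => i \notin F) s ->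
  (\int[P]_w (\prod_(i <- s) (1 - c * \1_(E i) w) * \1_(EF F) w)%:E
    = (\prod_(i <- s) (1 - c * fine (P (E i))))%:E * P (EF F))%E.
Proof.
move=> /andP[c0 c1].
have prod_ge0 t w : 0 <= \prod_(i <- t) (1 - c * \1_(E i) w).
  by apply: prodr_ge0 => i _; rewrite subr_ge0 indicE; case: (_ \in _);
    rewrite ?mulr1 ?mulr0.
have integrand_ge0 t B w : (0 <= (\prod_(i <- t) (1 - c * \1_(E i) w) * \1_B w)%:E)%E.
  by rewrite lee_fin mulr_ge0 // indicE; case: (_ \in _).
have measurable_integrand t B : measurable B ->
    measurable_fun [set: T]
      (fun w => (\prod_(i <- t) (1 - c * \1_(E i) w) * \1_B w : R)%:E).
  move=> mB; apply/measurable_EFinP/measurable_funM; last exact: measurable_indic.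
  apply: measurable_prod => i _; apply: measurable_funB; first exact: measurable_cst.
  by apply: measurable_funM; [exact: measurable_cst|exact: measurable_indic].
elim: s F => [|i s IH] F us sF.
  under eq_integral do rewrite big_nil mul1r.
  by rewrite integral_indic // setIT big_nil mul1e.
case/andP: sF => iF sF; case/andP: us => i_s us.
have isF : all (fun j => j \notin (i |` F)%fset) s.
  apply/allP => j js; rewrite in_fset1U negb_or (allP sF _ js) andbT.
  by apply: contraNneq i_s => <-.
(* Only intersections of the [E i] have known probabilities, so the factor
   [1 - c * \1_(E i)] is absorbed into [F] rather than split along [~` E i]. *)
have decomp w : \prod_(j <- s) (1 - c * \1_(E j) w) * \1_(EF F) w =
    \prod_(j <- i :: s) (1 - c * \1_(E j) w) * \1_(EF F) w +
    c * (\prod_(j <- s) (1 - c * \1_(E j) w) * \1_(EF (i |` F)%fset) w).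
  by rewrite big_cons /EF bigcap_fsetU1 indicI /=; ring.
have integral_decomp :
    (\int[P]_w (\prod_(j <- s) (1 - c * \1_(E j) w) * \1_(EF F) w)%:E =
     \int[P]_w (\prod_(j <- i :: s) (1 - c * \1_(E j) w) * \1_(EF F) w)%:E +
     c%:E * \int[P]_w
       (\prod_(j <- s) (1 - c * \1_(E j) w) * \1_(EF (i |` F)%fset) w)%:E)%E.
  under eq_integral do rewrite decomp EFinD (EFinM c).
  rewrite ge0_integralD //; last 3 first.
  - exact: measurable_integrand.
  - by move=> w _; rewrite mule_ge0 // lee_fin.
  - by apply: emeasurable_funM; [exact: measurable_cst|exact: measurable_integrand].
  by rewrite ge0_integralZl_EFin //; exact: measurable_integrand.
move: integral_decomp; rewrite IH // IH // P_EF_fsetU1 //.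
rewrite -[P (E i)]fineK ?fin_num_measure // -[P (EF F)]fineK ?fin_num_measure //.
set q := \prod_(j <- s) _; set p := fine (P (E i)); set pF := fine (P (EF F)).
rewrite -!EFinM => /(congr1 (fun x => x - (c * (q * (p * pF)))%:E)%E).
rewrite addeK // -EFinB => <-.
by rewrite big_cons -/p -/q; congr EFin; ring.
Qed.

Lemma expectation_prod_affine_indic (c : R) (s : seq I) :
  0 <= c <= 1 -> uniq s ->
  (\int[P]_w (\prod_(i <- s) (1 - c * \1_(E i) w))%:E
    = (\prod_(i <- s) (1 - c * fine (P (E i))))%:E)%E.
Proof.
move=> c01 us; have := @integral_prod_affine_indic c s fset0 c01 us.
have EF0 : EF fset0 = setT by apply/seteqP; split => // w _ i; rewrite /= inE.
rewrite EF0 probability_setT mule1; under eq_integral do rewrite indicT mulr1.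
by apply; apply/allP => i _; rewrite inE.
Qed.

End independent_events.

Lemma le_integral_off_set (R : realType) d (T : measurableType d)
    (mu : {measure set T -> \bar R}) (A : set T) (f g : T -> R) :
  measurable A -> measurable_fun setT f -> measurable_fun setT g ->
  (forall w, 0 <= f w <= 1) -> (forall w, 0 <= g w) ->
  (forall w, ~ A w -> f w = g w) ->
  (\int[mu]_w (f w)%:E <= \int[mu]_w (g w)%:E + mu A)%E.
Proof.
move=> mA mf mg f01 g0 fg.
have mA1 : measurable_fun setT (fun w => (\1_A w : R)%:E).
  exact/measurable_EFinP/measurable_indic.
apply: (@le_trans _ _ (\int[mu]_w ((g w)%:E + (\1_A w : R)%:E))%E).
  apply: ge0_le_integral => //.
  - by move=> w _; rewrite lee_fin; case/andP: (f01 w).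
  - exact/measurable_EFinP.
  - by apply: emeasurable_funD => //; exact/measurable_EFinP.
  move=> w _; rewrite -EFinD lee_fin indicE.
  case: (pselect (A w)) => Aw; last by rewrite memNset // addr0 fg.
  by rewrite mem_set //=; have /andP[_ f1] := f01 w; have := g0 w; lra.
rewrite ge0_integralD //; first by rewrite integral_indic // setIT.
- by move=> w _; rewrite lee_fin.
- exact/measurable_EFinP.
Qed.

Section stationary_population.
Context (R : realType) d (T : measurableType d) (P : probability T R).
Context (r : R) (a : int -> T -> nat).
Hypothesis ma : rv_family a.
Hypothesis ind : mutually_independent P a.
Hypothesis geo : geometric_tails P r a.
Hypothesis r01 : 0 <= r < 1.

Definition alive (m : int) : set T := [set w | 0 < m + (a m w)%:Z].

Lemma measurable_alive m : measurable (alive m).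
Proof.
by rewrite -[alive m]setTI; exact: (ma m measurableT (Y := [set i : nat | 0 < m + i%:Z])).
Qed.

Lemma P_alive k : P (alive (- k.+1%:Z)) = (r ^+ k.+1)%:E.
Proof.
rewrite -(geo (- k.+1%:Z)); congr (P _).
by apply/seteqP; split => w; rewrite /alive /=; lia.
Qed.

Lemma P_bigcap_alive (F : {fset int}) :
  P (\bigcap_(m in [set` F]) alive m) = (\prod_(m <- F) P (alive m))%E.
Proof. exact: (ind F (fun m => [set i : nat | 0 < m + i%:Z])). Qed.

Definition trunc_count (K : nat) (w : T) : nat :=
  (\sum_(k < K) (w \in alive (- k.+1%:Z)))%N.+1.

Lemma expr_trunc_count (z : R) K w : z ^+ trunc_count K w =
  z * \prod_(k < K) (1 - (1 - z) * \1_(alive (- k.+1%:Z)) w).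
Proof.
rewrite exprS expr_sum; congr (_ * _); apply: eq_bigr => k _.
by rewrite indicE; case: (_ \in _) => /=; ring.
Qed.

Lemma measurable_prod_alive (c : R) K :
  measurable_fun setT (fun w => \prod_(k < K) (1 - c * \1_(alive (- k.+1%:Z)) w)).
Proof.
apply: measurable_prod => k _; apply: measurable_funB; first exact: measurable_cst.
by apply: measurable_funM; [exact: measurable_cst|exact/measurable_indic/measurable_alive].
Qed.

Lemma measurable_expr_trunc_count (z : R) K :
  measurable_fun setT (fun w => z ^+ trunc_count K w).
Proof.
under eq_fun do rewrite expr_trunc_count.
by apply: measurable_funM; [exact: measurable_cst|exact: measurable_prod_alive].
Qed.

Lemma pgf_trunc_count (z : R) K : 0 <= z <= 1 ->
  (\int[P]_w (z ^+ trunc_count K w)%:E = (trunc_pgf r z K)%:E)%E.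
Proof.
move=> /andP[z0 z1].
have c01 : 0 <= 1 - z <= 1 by apply/andP; split; lra.
have uniq_s : uniq [seq - k.+1%:Z | k : 'I_K <- index_enum 'I_K].
  by rewrite map_inj_uniq ?index_enum_uniq // => i j /oppr_inj [] /val_inj.
have := expectation_prod_affine_indic measurable_alive P_bigcap_alive c01 uniq_s.
under eq_integral do rewrite big_map.
rewrite big_map => expectation_eq.
under eq_integral do rewrite expr_trunc_count EFinM.
rewrite ge0_integralZl_EFin //; last 2 first.
- move=> w _; rewrite lee_fin; apply: prodr_ge0 => k _.
  by rewrite indicE; case: (_ \in _) => /=; lra.
- exact/measurable_EFinP/measurable_prod_alive.
rewrite expectation_eq -EFinM /trunc_pgf; congr (EFin (z * _)).
by apply: eq_bigr => k _; rewrite P_alive.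
Qed.

Definition late_alive (K : nat) : set T := \bigcup_j alive (- (K + j).+1%:Z).

Lemma measurable_late_alive K : measurable (late_alive K).
Proof. by apply: bigcupT_measurable => j; exact: measurable_alive. Qed.

Lemma P_late_alive K : (P (late_alive K) <= (r ^+ K.+1 / (1 - r))%:E)%E.
Proof.
have /andP[r0 r1] := r01.
apply: le_trans (measure_sigma_subadditive _ (fun j => measurable_alive _)
  (measurable_late_alive K) (@subset_refl _ _)) _.
apply: lime_le; first by apply: is_cvg_nneseries => j _ _.
apply: nearW => n.
rewrite (eq_bigr (fun j => (r ^+ K.+1 * r ^+ j)%:E)); last first.
  by move=> j _; rewrite -exprD addSn; exact: P_alive.
rewrite sumEFin lee_fin -mulr_sumr; apply: ler_wpM2l; first exact: exprn_ge0.
have := congr1 (fun u => u n) (geometric_seriesE 1 (negbT (lt_eqF r1))).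
rewrite /series /geometric /=; under eq_bigr do rewrite mul1r; rewrite mul1r => ->.
rewrite -[leRHS]mul1r ler_wpM2r ?invr_ge0 ?subr_ge0 ?(ltW r1) //.
by rewrite gerDl oppr_le0 exprn_ge0.
Qed.

Definition alive_window (K : nat) (w : T) : set int :=
  [set m | - K%:Z <= m < 0 /\ alive m w].

Lemma alive_windowS K w : alive_window K.+1 w =
  if w \in alive (- K.+1%:Z) then - K.+1%:Z |` alive_window K w
  else alive_window K w.
Proof.
apply/seteqP; split => m /=.
  move=> [mK alive_m]; have [m_eq|neq] := eqVneq m (- K.+1%:Z).
    by rewrite -m_eq (mem_set alive_m); left.
  by case: ifP => _; [right|]; split => //; move: neq mK; lia.
case: ifPn => [/set_mem alive_K [->|]|_]; last 2 first.
- by move=> [mK ?]; split => //; move: mK; lia.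
- by move=> [mK ?]; split => //; move: mK; lia.
by split => //; lia.
Qed.

Lemma card_alive_window K w : finite_set (alive_window K w) /\
  (\sum_(k < K) (w \in alive (- k.+1%:Z)))%N = #|` fset_set (alive_window K w)|.
Proof.
elim: K => [|K [fin IH]].
  have -> : alive_window 0 w = set0 by apply/seteqP; split => m //= [mK _]; lia.
  by rewrite fset_set0 big_ord0; split; [exact: finite_set0|].
rewrite alive_windowS big_ord_recr /= IH; case: ifP => _; last by rewrite addn0.
have K_notin : - K.+1%:Z \notin fset_set (alive_window K w).
  by rewrite in_fset_set //; apply/negP; rewrite inE => -[]; lia.
split; first by rewrite finite_setU; split => //; exact: finite_set1.
by rewrite fset_setU1 // cardfsU1 K_notin addn1 add1n.
Qed.

Lemma N0_trunc_count K w : ~ late_alive K w -> N0 a w = trunc_count K w.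
Proof.
move=> not_late; rewrite /N0 /trunc_count (proj2 (card_alive_window K w)).
suff -> : [set m : int | m < 0 /\ 0 < m + (a m w)%:Z] = alive_window K w by [].
apply/seteqP; split => m /=; last by case=> /andP[].
move=> [m0 alive_m]; split => //; rewrite m0 andbT leNgt; apply/negP => mK.
apply: not_late; exists (`|m|%N - K.+1)%N => //.
by have -> : - (K + (`|m|%N - K.+1)).+1%:Z = m by lia.
Qed.

(* The alive set is then infinite, and [fset_set] returns its junk value [fset0]. *)
Lemma N0_late_alive w : (forall K, late_alive K w) -> N0 a w = 1%N.
Proof.
move=> late; pose S := [set m : int | m < 0 /\ 0 < m + (a m w)%:Z].
suff : ~ finite_set S by rewrite /N0 /fset_set; case: pselect.
move=> fin; pose K := (\max_(m <- fset_set S) absz m)%N.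
have [j _ alive_j] := late K.
have : (absz (- (K + j).+1%:Z) <= K)%N.
  by apply: leq_bigmax_seq => //; rewrite in_fset_set // inE; split => //; lia.
lia.
Qed.

Lemma measurable_expr_N0 (z : R) : measurable_fun setT (fun w => z ^+ N0 a w).
Proof.
have mlate := measurable_late_alive.
have cover : setT = \bigcup_K (~` late_alive K) `|` \bigcap_K late_alive K.
  apply/seteqP; split => // w _.
  case: (pselect (forall K, late_alive K w)) => [?|/existsNP[K ?]];
    [right|left; exists K] => //.
rewrite cover measurable_funU; first split.
- apply/measurable_fun_bigcup => [K|K]; first exact/measurableC.
  apply: (@eq_measurable_fun _ _ _ _ _ (fun w => z ^+ trunc_count K w)).
    by move=> w /set_mem not_late; rewrite (N0_trunc_count not_late).
  exact: measurable_funS (measurable_expr_trunc_count z K).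
- apply: (@eq_measurable_fun _ _ _ _ _ (cst z)); last exact: measurable_cst.
  by move=> w /set_mem late; rewrite N0_late_alive // => K; exact: late.
- by apply: bigcupT_measurable => K; exact/measurableC.
- by apply: bigcapT_measurable.
Qed.

Lemma pgf_N0_trunc_bounds (z : R) K : 0 <= z <= 1 ->
  (pgf_N0 P a z <= (trunc_pgf r z K)%:E + P (late_alive K))%E /\
  ((trunc_pgf r z K)%:E <= pgf_N0 P a z + P (late_alive K))%E.
Proof.
move=> z01; have /andP[z0 z1] := z01.
have expr01 n : 0 <= z ^+ n <= 1 by rewrite exprn_ge0 ?exprn_ile1.
rewrite -pgf_trunc_count //; split; apply: le_integral_off_set => //.
- exact: measurable_late_alive.
- exact: measurable_expr_N0.
- exact: measurable_expr_trunc_count.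
- by move=> w; rewrite exprn_ge0.
- by move=> w /N0_trunc_count ->.
- exact: measurable_late_alive.
- exact: measurable_expr_trunc_count.
- exact: measurable_expr_N0.
- by move=> w; rewrite exprn_ge0.
- by move=> w /N0_trunc_count ->.
Qed.

Lemma fin_num_pgf_N0 (z : R) : 0 <= z <= 1 -> pgf_N0 P a z \is a fin_num.
Proof.
move=> z01; have [ub _] := pgf_N0_trunc_bounds 0 z01.
have /andP[z0 _] := z01.
rewrite ge0_fin_numE; last by apply: integral_ge0 => w _; rewrite lee_fin exprn_ge0.
apply: le_lt_trans ub _; apply: lte_add_pinfty; first exact: ltry.
exact: le_lt_trans (P_late_alive 0) (ltry _).
Qed.

Lemma pgf_N0_trunc_error (z : R) K : 0 <= z <= 1 ->
  `|fine (pgf_N0 P a z) - trunc_pgf r z K| <= r ^+ K.+1 / (1 - r).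
Proof.
move=> z01; have [ub lb] := pgf_N0_trunc_bounds K z01.
have ub' := le_trans ub (leeD2l _ (P_late_alive K)).
have lb' := le_trans lb (leeD2l _ (P_late_alive K)).
rewrite -[pgf_N0 P a z]fineK ?fin_num_pgf_N0 // -!EFinD !lee_fin in ub' lb'.
by rewrite ler_norml; apply/andP; split; lra.
Qed.

Lemma pgf_N0_shift_error (z : R) K : 0 <= z <= 1 ->
  `|fine (pgf_N0 P a z) - z * fine (pgf_N0 P a (r * z + (1 - r)))|
    <= 2 * r / (1 - r) * r ^+ K.
Proof.
move=> z01; have /andP[z0 z1] := z01; have /andP[r0 r1] := r01.
have y01 : 0 <= r * z + (1 - r) <= 1.
  by apply: affine_unit_interval; rewrite // r0 ltW.
have err_z := pgf_N0_trunc_error K.+1 z01; have err_y := pgf_N0_trunc_error K y01.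
rewrite trunc_pgfS in err_z.
set Gz := fine (pgf_N0 P a z) in err_z *.
set Gy := fine (pgf_N0 P a _) in err_y *.
set Q := trunc_pgf _ _ _ in err_z err_y.
apply: le_trans (ler_distD (z * Q) Gz (z * Gy)) _.
have : `|z * Q - z * Gy| <= r ^+ K.+1 / (1 - r).
  rewrite -mulrBr normrM ger0_norm // distrC.
  by apply: le_trans err_y; rewrite ler_piMl.
have : r ^+ K.+2 / (1 - r) <= r ^+ K.+1 / (1 - r).
  rewrite ler_pM2r ?invr_gt0 ?subr_gt0 // [leLHS]exprS.
  by rewrite ler_piMl ?exprn_ge0 // ltW.
have : 2 * r / (1 - r) * r ^+ K = 2 * (r ^+ K.+1 / (1 - r)) by rewrite exprS; ring.
lra.
Qed.

End stationary_population.

Lemma le0_geometric_bound (R : realType) (c M r : R) :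
  0 <= r < 1 -> (forall n, c <= M * r ^+ n) -> c <= 0.
Proof.
move=> /andP[r0 r1] ub; have r_lt1 : `|r| < 1 by rewrite ger0_norm.
rewrite -(cvg_lim _ (cvg_geometric M r_lt1)) //.
by apply: limr_ge; [exact: cvgP (cvg_geometric M r_lt1)|exact: nearW].
Qed.

Theorem mainTheorem5 (R : realType) (d : measure_display) (T : measurableType d)
  (P : probability T R) (s : R) (a : int -> T -> nat) :
  0 < s <= 1 ->
  rv_family a ->
  mutually_independent P a ->
  geometric_tails P (1 - s) a ->
  forall z : R, 0 <= z <= 1 ->
    pgf_N0 P a z = (z%:E * pgf_N0 P a ((1 - s) * z + s))%E.
Proof.
move=> /andP[s0 s1] ma ind geo z z01.
have r01 : 0 <= 1 - s < 1 by apply/andP; split; lra.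
have fin_pgf := fin_num_pgf_N0 ma ind geo r01.
have y01 : 0 <= (1 - s) * z + (1 - (1 - s)) <= 1.
  by apply: affine_unit_interval => //; apply/andP; split; lra.
rewrite {2}(_ : s = 1 - (1 - s)); last by ring.
rewrite -(fineK (fin_pgf _ z01)) -(fineK (fin_pgf _ y01)) -EFinM; congr EFin.
apply/eqP; rewrite -subr_eq0 -normr_le0.
exact: le0_geometric_bound r01 (fun K => pgf_N0_shift_error ma ind geo r01 K z01).
Qed.
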